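(* Let $G$ be a finite abelian group of order $n$, let $S\subset G^n$ be the set of bijections $\{1,\dots,n\}\to G$, and let $m\ge0$ be an integer. Let $\mathfrak{M}_m\subset\hat G^n$ be the set of all $m$-sparse $\chi$ whose nontrivial coordinates are killed by a unique partition with $m/2$ parts (so $\mathfrak M_m=\emptyset$ if $m$ is odd). Then \[ \sum_{m\text{-sparse}~\chi\notin\mathfrak{M}_m}|\widehat{1_S}(\chi)|^3 = O_m\Big(\frac1n\Big(\frac{n!}{n^n}\Big)^3\Big), \] with the implied constant depending only on $m$.
   Context: $\hat G$ is the dual group of $G$, written additively, with $0$ the trivial character. For $\chi=(\chi_1,\dots,\chi_n)\in\hat G^n$, $\widehat{1_S}(\chi)=\frac{1}{n^n}\sum_{\pi\in S}\prod_{i=1}^n\chi_i(\pi(i))$. $\chi$ is $m$-sparse if exactly $m$ of its coordinates are nontrivial. If the nontrivial coordinates of $\chi$ are $\chi_{j_1},\dots,\chi_{j_m}$ (indexed by a set $N=\{j_1,\dots,j_m\}$), a partition $\mathcal P$ of $N$ kills them if $\sum_{i\in P}\chi_i=0$ for every part $P\in\mathcal P$. *)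

(* G is a finite abelian group (written multiplicatively as a
   finGroupType with abelian [set: gT]); its dual group is irr [set: gT],
   indexed by Iirr [set: gT], with 0 the trivial character. *)
From HB Require Import structures.
From mathcomp Require Import all_boot all_order all_algebra all_fingroup all_solvable all_field all_character.
Set Implicit Arguments. Unset Strict Implicit. Unset Printing Implicit Defensive.
Import Order.TTheory GRing.Theory Num.Theory.
Local Open Scope ring_scope.

Section Defs.
Variable gT : finGroupType.

Definition dualvec := {ffun 'I_#|gT| -> Iirr [set: gT]}.

(* S = bijections {1..n} -> G (injective maps between sets of equal size) *)
Definition bijS : {set {ffun 'I_#|gT| -> gT}} := [set pi : {ffun 'I_#|gT| -> gT} | injectiveb pi].

Definition hat1S (chi : dualvec) : algC :=
  ((#|gT| ^ #|gT|)%N%:R)^-1 *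
    \sum_(pi in bijS) \prod_(i < #|gT|) 'chi[[set: gT]]_(chi i) (pi i).

Definition nontriv (chi : dualvec) : {set 'I_#|gT|} := [set i | chi i != 0].

Definition sparse (m : nat) (chi : dualvec) : bool := #|nontriv chi| == m.

(* P kills chi: in every part, the (additively written) sum of the characters
   is trivial, i.e. their product as class functions is the trivial character *)
Definition kills (chi : dualvec) (P : {set {set 'I_#|gT|}}) : bool :=
  [forall B in P, \prod_(i in B) 'chi[[set: gT]]_(chi i) == 1].

Definition half_partitions (m : nat) (chi : dualvec) : {set {set {set 'I_#|gT|}}} :=
  [set P | [&& partition P (nontriv chi), (#|P| * 2 == m)%N & kills chi P]].

Definition inM (m : nat) (chi : dualvec) : bool :=
  sparse m chi && (#|half_partitions m chi| == 1)%N.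

End Defs.

From HB Require Import structures.
From mathcomp Require Import all_boot all_order all_algebra all_fingroup all_solvable all_field all_character.
From mathcomp Require Import ring zify.
Set Implicit Arguments. Unset Strict Implicit. Unset Printing Implicit Defensive.
Import Order.TTheory GRing.Theory Num.Theory.
Local Open Scope ring_scope.

(* Write [hat1S chi] as [n^-n] times the sum [A(N, psi)], over all bijections
   [pi], of [\prod_(i in N) psi_i (pi i)], where [N] is the support of [chi].
   Summing over the image [pi j] of every [j] against a fixed coordinate [a]
   gives [(n - |N| + 1) A(N) = (\sum_x psi_a x) A(N - a) - \sum_j A(N - a, psi)]
   with [psi_j] replaced by [psi_j psi_a]; as [\sum_x psi_a x] is [n] or [0],
   induction yields [|A(N)| <= m! (n - m)! max_P n^|P|] over the partitions [P]
   of [N] killing [chi].  A partition [P] with [p] blocks kills at most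
   [n^(m - p)] characters supported on [N].  This saves a factor [n] when
   [2p < m]; when [2p = m], a [chi] outside [M_m] is also killed by a second
   pairing, which costs one more degree of freedom.  Summing over the [C(n, m)]
   supports and their boundedly many partitions gives the bound. *)

Lemma leq_mul_bigmax (I : finType) (P : pred I) (F : I -> nat) k X :
  (forall i, P i -> k * F i <= X)%N -> (k * \max_(i | P i) F i <= X)%N.
Proof.
by move=> le_kF; rewrite (big_morph _ (maxnMr k) (muln0 k)); apply/bigmax_leqP.
Qed.

Lemma bigmax_expS_leq (I : finType) (P : pred I) (F : I -> nat) k X :
  (forall i, P i -> F i ^ k.+1 <= X)%N -> ((\max_(i | P i) F i) ^ k.+1 <= X)%N.
Proof.
move=> le_FX; elim/big_ind: _ => [|x y le_x le_y|//]; first by rewrite exp0n.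
by rewrite /maxn; case: ltnP.
Qed.

Lemma partition_setU1_block (T : finType) (P : {set {set T}}) (D B : {set T}) a :
  partition P D -> B \in P -> a \notin D ->
  partition ((a |: B) |: (P :\ B)) (a |: D).
Proof.
move=> partP PB aD; have /subsetP sBD := partitionS partP PB.
have -> : a |: D = (a |: B) :|: (D :\: B).
  by apply/setP => x; rewrite !inE; case: (x \in B) (sBD x) => [->|]; rewrite ?orbT ?orbF.
apply: partitionU1; first exact: partitionD1.
  by apply/set0Pn; exists a; rewrite setU11.
rewrite -setI_eq0; apply/eqP/setP => x; rewrite !inE.
by case: eqP => [->|_]; [rewrite (negbTE aD) !andbF | case: (x \in B)].
Qed.

Lemma card_setD_transversal (T : finType) (P : {set {set T}}) (N : {set T}) :
  partition P N -> #|N :\: transversal P N| = (#|N| - #|P|)%N.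
Proof.
move/transversalP => trX.
by rewrite cardsD (setIidPr (transversal_sub trX)) (card_transversal trX).
Qed.

Lemma eq_set2_card2 (T : finType) (A : {set T}) x y :
  #|A| = 2 -> x \in A -> y \in A -> x != y -> A = [set x; y].
Proof.
move=> A2 Ax Ay xy; apply/eqP; rewrite eq_sym eqEcard subUset !sub1set Ax Ay.
by rewrite cards2 xy A2.
Qed.

Lemma leq_card_bigcup (I T : finType) (J : {pred I}) (A : I -> {set T}) :
  (#|\bigcup_(i in J) A i| <= \sum_(i in J) #|A i|)%N.
Proof.
elim/big_rec2: _ => [|i k U _ leUk]; first by rewrite cards0.
by apply: leq_trans (leq_of_leqif (leq_card_setU _ _)) _; rewrite leq_add2l.
Qed.

Lemma card_partitions_le (T : finType) (N : {set T}) :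
  (#|[set P | partition P N]| <= 2 ^ 2 ^ #|N|)%N.
Proof.
rewrite -!card_powerset; apply/subset_leq_card/subsetP => P; rewrite inE => partP.
by rewrite powersetE; apply/subsetP => B PB; rewrite powersetE (partitionS partP PB).
Qed.

Lemma card_partitions_of_card_le (T : finType) m :
  (#|[set P : {set {set T}} | partition P (cover P) && (#|cover P| == m)]|
     <= 'C(#|T|, m) * 2 ^ 2 ^ m)%N.
Proof.
have -> : [set P : {set {set T}} | partition P (cover P) && (#|cover P| == m)] =
          \bigcup_(N in [set N : {set T} | #|N| == m]) [set P | partition P N].
  apply/setP => P; rewrite !inE; apply/andP/bigcupP => [[partP cardP] | [N]].
    by exists (cover P); rewrite !inE.
  by rewrite !inE => cardN partP; rewrite (cover_partition partP).
apply: leq_trans (leq_card_bigcup _ _) _; rewrite -card_draws -sum_nat_const.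
by apply: leq_sum => N; rewrite inE => /eqP <-; apply: card_partitions_le.
Qed.

Lemma fact_mul_expn_le n m : (m <= n)%N -> ((n - m)`! * n ^ m <= m ^ m * n`!)%N.
Proof.
move=> le_mn; rewrite -(ffact_fact le_mn) mulnA [X in (X <= _)%N]mulnC leq_mul2r.
have prod_const k : (k ^ m = \prod_(i < m) k)%N by rewrite prod_nat_const card_ord.
rewrite ffact_prod !prod_const -big_split /=; apply/orP; right.
by apply: leq_prod => i _; have := ltn_ord i; nia.
Qed.

Lemma fact_cube_bin_le n m A : (m <= n)%N ->
  ((m`! * (n - m)`!) ^ 3 * ('C(n, m) * A * (A * n ^ (2 * m)))
     <= (m`! * m ^ m) ^ 2 * A ^ 2 * n`! ^ 3)%N.
Proof.
move=> le_mn; apply: (@leq_trans ((m`! * A) ^ 2 * n`! * ((n - m)`! * n ^ m) ^ 2)%N).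
  by apply: eq_leq; rewrite -(bin_fact le_mn) [(2 * m)%N]mulnC expnM; ring.
rewrite [X in (_ <= X)%N](_ : _ = (m`! * A) ^ 2 * n`! * (m ^ m * n`!) ^ 2)%N; last by ring.
by rewrite leq_mul2l leq_exp2r // fact_mul_expn_le // orbT.
Qed.

Section BijectionSums.
Variable gT : finGroupType.
Local Notation n := #|gT|.
Local Notation CF := 'CF([set: gT]).
Implicit Types (D : {set 'I_n}) (psi : 'I_n -> CF) (a j : 'I_n) (P : {set {set 'I_n}}).

Definition bij_sum (D : {set 'I_n}) (psi : 'I_n -> CF) : algC :=
  \sum_(pi in bijS gT) \prod_(i in D) psi i (pi i).

Definition merge_coord (psi : 'I_n -> CF) (j a : 'I_n) : 'I_n -> CF :=
  fun i => if i == j then psi j * psi a else psi i.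

Definition ffun_tperm (a j : 'I_n) (pi : {ffun 'I_n -> gT}) : {ffun 'I_n -> gT} :=
  [ffun i => pi (tperm a j i)].

Lemma ffun_tpermK a j : involutive (ffun_tperm a j).
Proof. by move=> pi; apply/ffunP=> i; rewrite !ffunE tpermK. Qed.

Lemma ffun_tperm_bijS a j pi : (ffun_tperm a j pi \in bijS gT) = (pi \in bijS gT).
Proof.
rewrite !inE; apply/injectiveP/injectiveP => inj_pi x y; last first.
  by rewrite !ffunE => /inj_pi/perm_inj.
by move=> eq_pi; apply: (@perm_inj _ (tperm a j)); apply: inj_pi; rewrite !ffunE !tpermK.
Qed.

Lemma card_bijS : #|bijS gT| = n`!.
Proof. by rewrite card_inj_ffuns card_ord ffactnn. Qed.

Lemma sum_bijS_reindex (pi : {ffun 'I_n -> gT}) (f : gT -> algC) :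
  pi \in bijS gT -> \sum_(j < n) f (pi j) = \sum_x f x.
Proof.
rewrite inE => /injectiveP inj_pi.
have bij_pi : bijective pi by apply: inj_card_bij; rewrite // card_ord.
by rewrite (reindex pi) //; exact: onW_bij.
Qed.

Section Recursion.
Variables (D : {set 'I_n}) (psi : 'I_n -> CF).
Local Notation prodD pi := (\prod_(i in D) psi i (pi i)).

Lemma bij_sum_tperm a j : a \notin D -> j \notin D ->
  bij_sum (a |: D) psi = \sum_(pi in bijS gT) prodD pi * psi a (pi j).
Proof.
move=> aD jD; rewrite /bij_sum (reindex_inj (inv_inj (ffun_tpermK a j))) /=.
apply: eq_big => [pi|pi _]; first by rewrite ffun_tperm_bijS.
rewrite big_setU1 //= ffunE tpermL mulrC; congr (_ * _).
by apply: eq_bigr => i iD; rewrite ffunE tpermD //; apply: contraTneq iD => <-.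
Qed.

Lemma bij_sum_merge a j : j \in D ->
  bij_sum D (merge_coord psi j a) = \sum_(pi in bijS gT) prodD pi * psi a (pi j).
Proof.
move=> jD; apply: eq_bigr => pi _; rewrite !(bigD1 j jD) /= /merge_coord eqxx cfunE.
rewrite [RHS]mulrAC; congr (_ * _).
by apply: eq_bigr => i /andP[_ /negbTE ->].
Qed.

(* Summing [psi a (pi j)] over all [j] gives [\sum_x psi a x]; the terms with
   [j] outside [D] all equal [bij_sum (a |: D) psi] after swapping [a] and [j]. *)
Lemma bij_sum_rec a : a \notin D ->
  (#|~: D|)%:R * bij_sum (a |: D) psi =
  (\sum_x psi a x) * bij_sum D psi - \sum_(j in D) bij_sum D (merge_coord psi j a).
Proof.
move=> aD; have -> : (\sum_x psi a x) * bij_sum D psi =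
    \sum_j \sum_(pi in bijS gT) prodD pi * psi a (pi j).
  rewrite exchange_big mulrC mulr_suml; apply: eq_bigr => pi piS.
  by rewrite -(sum_bijS_reindex (psi a) piS) mulr_sumr.
rewrite (bigID (mem D)) /= (eq_bigr _ (fun j => @bij_sum_merge a j)) addrC addrK.
rewrite mulr_natl -sumr_const; apply: eq_big => [j|j jD]; first by rewrite inE.
by rewrite (bij_sum_tperm (j := j) aD) // -in_setC.
Qed.

End Recursion.

Lemma sum_lin_char (phi : CF) : phi \is a linear_char ->
  \sum_x phi x = if phi == 1 then n%:R else 0.
Proof.
move=> /lin_char_irr/irrP[i ->]; have := cfdot_irr i 0.
rewrite cfdotE irr0 cardsT -(inj_eq irr_inj) irr0.
have -> : \sum_(x in [set: gT]) 'chi_i x * ((1 : CF) x)^* = \sum_x 'chi_i x.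
  by apply: eq_big => [x|x _]; rewrite ?inE // cfun1E inE conjC1 mulr1.
have n_neq0 : (n%:R : algC) != 0 by rewrite pnatr_eq0 -lt0n -cardsT cardG_gt0.
by move/(canRL (mulVKf n_neq0)) ->; case: eqP; rewrite ?mulr1 ?mulr0.
Qed.

Definition cfkills (psi : 'I_n -> CF) (P : {set {set 'I_n}}) : bool :=
  [forall B in P, \prod_(i in B) psi i == 1].

Definition kill_weight (D : {set 'I_n}) (psi : 'I_n -> CF) : nat :=
  \max_(P | partition P D && cfkills psi P) n ^ #|P|.

Lemma leq_kill_weight D psi P :
  partition P D -> cfkills psi P -> (n ^ #|P| <= kill_weight D psi)%N.
Proof.
move=> partP killP.
by apply: (@leq_bigmax_cond _ (fun Q => partition Q D && cfkills psi Q)); rewrite partP.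
Qed.

Lemma kill_weight_set0 psi : (0 < kill_weight set0 psi)%N.
Proof.
apply: leq_trans (leq_kill_weight (P := set0) _ _); first by rewrite cards0.
  by rewrite partition_set0.
by apply/forall_inP => B; rewrite inE.
Qed.

Lemma kill_weight_setU1_trivial D psi a : a \notin D -> psi a = 1 ->
  (n * kill_weight D psi <= kill_weight (a |: D) psi)%N.
Proof.
move=> aD psi_a; apply: leq_mul_bigmax => P /andP[partP killP].
have aP : [set a] \notin P.
  apply: contra aD => aP; rewrite -(cover_partition partP).
  by apply/bigcupP; exists [set a]; rewrite ?set11.
rewrite -expnS; have -> : #|P|.+1 = #|[set a] |: P| by rewrite cardsU1 aP.
apply: leq_kill_weight.
  apply: partitionU1 => //; first by apply/set0Pn; exists a; rewrite set11.
  by rewrite disjoints1.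
apply/forall_inP => B; rewrite !inE => /orP[/eqP -> | PB]; first by rewrite big_set1 psi_a.
by move/forall_inP: killP; apply.
Qed.

Lemma kill_weight_merge D psi a j : a \notin D -> j \in D ->
  (kill_weight D (merge_coord psi j a) <= kill_weight (a |: D) psi)%N.
Proof.
move=> aD jD; apply/bigmax_leqP => P /andP[partP killP].
have tiP := partition_trivIset partP; have covP := cover_partition partP.
set B := pblock P j; have jB : j \in B by rewrite mem_pblock covP.
have PB : B \in P by rewrite pblock_mem ?covP.
have aB : a \notin B by apply: contra aD; apply: subsetP (partitionS partP PB) a.
have aPB : a |: B \notin P :\ B.
  apply: contra aD => /setD1P[_ PaB]; rewrite -covP.
  by apply/bigcupP; exists (a |: B); rewrite ?setU11.
have <- : #|(a |: B) |: (P :\ B)| = #|P| by rewrite cardsU1 aPB (cardsD1 B P) PB.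
apply: leq_kill_weight; first exact: partition_setU1_block.
have merge_j : merge_coord psi j a j = psi j * psi a by rewrite /merge_coord eqxx.
have merge_out i : i != j -> merge_coord psi j a i = psi i.
  by rewrite /merge_coord => /negbTE ->.
apply/forall_inP => C; rewrite !inE => /orP[/eqP -> | /andP[CB PC]].
  move/forall_inP/(_ B PB): killP; rewrite big_setU1 //= !(bigD1 j jB) /= merge_j.
  rewrite (eq_bigr psi); last by move=> i /andP[_ /merge_out].
  by rewrite mulrCA mulrA.
move/forall_inP/(_ C PC): killP; rewrite (eq_bigr psi) // => i iC.
apply: merge_out; apply: contraNneq CB => eq_ij.
by rewrite /B -eq_ij (def_pblock tiP PC iC).
Qed.

Lemma bij_sum_bound_setU1 D a : a \notin D ->
  (forall psi, (forall i, psi i \is a linear_char) ->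
     `|bij_sum D psi| <= (#|D|`! * (n - #|D|)`! * kill_weight D psi)%:R) ->
  forall psi, (forall i, psi i \is a linear_char) ->
  `|bij_sum (a |: D) psi| <=
    (#|a |: D|`! * (n - #|a |: D|)`! * kill_weight (a |: D) psi)%:R.
Proof.
move=> aD IH psi lin_psi; rewrite cardsU1 aD add1n.
set d := #|D|; set K := (d`! * (n - d)`! * kill_weight (a |: D) psi)%N.
have lt_dn : (d < n)%N by have := max_card (a |: D); rewrite cardsU1 aD card_ord.
have card_DC : #|~: D| = (n - d)%N by rewrite cardsCs setCK card_ord.
have le_main : `|(\sum_x psi a x) * bij_sum D psi| <= K%:R.
  rewrite sum_lin_char //; case: eqP => [psi_a|_]; last by rewrite mul0r normr0 ler0n.
  rewrite normrM normr_nat; apply: le_trans (ler_wpM2l (ler0n _ _) (IH _ lin_psi)) _.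
  by rewrite -natrM ler_nat /K mulnCA leq_mul2l kill_weight_setU1_trivial ?orbT.
have le_merge : `|\sum_(j in D) bij_sum D (merge_coord psi j a)| <= (d * K)%:R.
  rewrite mulnC natrM mulr_natr -sumr_const; apply: le_trans (ler_norm_sum _ _ _) _.
  apply: ler_sum => j jD; apply: le_trans (IH _ _) _.
    by move=> i; rewrite /merge_coord; case: eqP => _; rewrite ?rpredM.
  by rewrite ler_nat leq_mul2l kill_weight_merge ?orbT.
have gt0_nd : (0 : algC) < (n - d)%:R by rewrite ltr0n subn_gt0.
rewrite -(ler_pM2l gt0_nd) -[X in X * _]normr_nat -normrM -card_DC bij_sum_rec //.
apply: le_trans (ler_normB _ _) _; apply: le_trans (lerD le_main le_merge) _.
rewrite -natrD -natrM ler_nat /K; apply: eq_leq.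
by rewrite card_DC -(subnSK lt_dn) !factS; ring.
Qed.

Lemma bij_sum_bound D psi : (forall i, psi i \is a linear_char) ->
  `|bij_sum D psi| <= (#|D|`! * (n - #|D|)`! * kill_weight D psi)%:R.
Proof.
move Dd : #|D| => d; elim: d D Dd psi => [|d IHd] D Dd psi lin_psi.
  rewrite (cards0_eq Dd) /bij_sum (eq_bigr (fun _ => 1)); last first.
    by move=> pi _; rewrite big_set0.
  rewrite sumr_const card_bijS subn0 mul1n normr_nat ler_nat.
  by rewrite -{1}[n`!]muln1 leq_mul2l kill_weight_set0 orbT.
have /set0Pn[a Da] : D != set0 by rewrite -card_gt0 Dd.
have Dd' : #|D :\ a| = d by move: Dd; rewrite (cardsD1 a) Da => [[]].
rewrite -Dd -(setD1K Da); apply: bij_sum_bound_setU1 lin_psi; first by rewrite setD11.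
by rewrite Dd'; apply: IHd.
Qed.

End BijectionSums.

Section KillingPartitions.
Variable gT : finGroupType.
Local Notation n := #|gT|.
Implicit Types (chi : dualvec gT) (N X : {set 'I_n}) (P Q : {set {set 'I_n}}).

Lemma nontriv_eq_agree chi chi' N : nontriv chi = N -> nontriv chi' = N ->
  {in N, chi =1 chi'} -> chi = chi'.
Proof.
move=> suppN suppN' agreeN; apply/ffunP => i.
have [/agreeN //|iN] := boolP (i \in N).
have := iN; rewrite -suppN inE negbK => /eqP ->.
by move: iN; rewrite -suppN' inE negbK => /eqP ->.
Qed.

(* The product relation of the killed block [B] recovers its (at most one)
   coordinate in [X] from the others. *)
Lemma kills_agree_block chi chi' P B X : kills chi P -> kills chi' P -> B \in P ->
  (#|X :&: B| <= 1)%N -> {in B :\: X, chi =1 chi'} -> {in B, chi =1 chi'}.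
Proof.
move=> /forall_inP killP /forall_inP killP' PB X1 agree i Bi.
have [iX|iX] := boolP (i \in X); last by apply: agree; rewrite inE iX.
have agree_i' j : j \in B -> j != i -> chi j = chi' j.
  move=> Bj ji; apply: agree; rewrite inE Bj andbT; apply: contra ji => jX.
  by apply/eqP/(card_le1_eqP X1); rewrite inE ?jX ?iX.
apply: irr_inj; move: (killP B PB) (killP' B PB); rewrite !(bigD1 i Bi) /=.
rewrite (eq_bigr (fun j => 'chi_(chi' j))) => [/eqP kill /eqP kill'|j /andP[]].
  by rewrite -[LHS]mulr1 -kill' mulrCA kill mulr1.
by move=> Bj ji; rewrite agree_i'.
Qed.

Lemma kills_agree_transversal chi chi' P Q N X :
  is_transversal X P N -> Q \subset P -> kills chi P -> kills chi' P ->
  {in cover Q :\: X, chi =1 chi'} -> {in cover Q, chi =1 chi'}.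
Proof.
move=> /and3P[_ _ /forall_inP trX] /subsetP sQP killP killP' agree i /bigcupP[B QB Bi].
have PB := sQP B QB; apply: (kills_agree_block (X := X) killP killP' PB) Bi.
  by rewrite (eqP (trX B PB)).
by move=> j /setDP[Bj jX]; apply: agree; rewrite inE jX; apply/bigcupP; exists B.
Qed.

Lemma kills_block_ge2 chi P B : partition P (nontriv chi) -> kills chi P ->
  B \in P -> (2 <= #|B|)%N.
Proof.
move=> partP /forall_inP killP PB; rewrite ltnNge; apply/negP => B_le1.
have /set0Pn[i Bi] := partition_neq0 partP PB.
have B1 : B = [set i] by apply/eqP; rewrite eq_sym eqEcard sub1set Bi cards1.
move: (killP B PB) (subsetP (partitionS partP PB) i Bi).
by rewrite B1 big_set1 -irr0 inE => /eqP/irr_inj ->; rewrite eqxx.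
Qed.

(* Equality in [#|N| = \sum_(B in P) #|B| >= 2 #|P|] forces every block to
   have size 2. *)
Lemma kills_pairing chi P B : partition P (nontriv chi) -> kills chi P ->
  (#|P| * 2 = #|nontriv chi|)%N -> B \in P -> #|B| = 2.
Proof.
move=> partP killP cardP PB.
have le2 := @leqif_sum _ (mem P) _ (fun=> 2%N) (fun B => #|B|)
  (fun B PB => leqif_eq (kills_block_ge2 partP killP PB)).
move: le2.2; rewrite sum_nat_const -(card_partition partP) -cardP eqxx.
by move/esym/forall_inP/(_ B PB)/eqP.
Qed.

End KillingPartitions.

Section CountingKilledCharacters.
Variable gT : finGroupType.
Hypothesis abG : abelian [set: gT].
Local Notation n := #|gT|.
Implicit Types (chi : dualvec gT) (F N X : {set 'I_n}) (P Q : {set {set 'I_n}}).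

Lemma card_dualvec_agree F (S : {set dualvec gT}) :
  {in S &, forall chi chi', {in F, chi =1 chi'} -> chi = chi'} ->
  (#|S| <= n ^ #|F|)%N.
Proof.
move=> agreeF_inj; pose r chi : dualvec gT := [ffun i => if i \in F then chi i else 0].
have inj_r : {in S &, injective r}.
  move=> chi chi' chiS chi'S eq_r; apply: agreeF_inj => // i Fi.
  by have /ffunP/(_ i) := eq_r; rewrite !ffunE Fi.
rewrite -(card_in_imset inj_r).
apply: leq_trans (subset_leq_card (_ : _ \subset pffun_on 0 F [set: Iirr [set: gT]])) _.
  apply/subsetP => _ /imsetP[chi _ ->]; apply/pffun_onP; split=> [|? _]; last by rewrite inE.
  by apply/subsetP => i; rewrite !inE ffunE; case: ifP => //; rewrite eqxx.
by rewrite card_pffun_on cardsT card_Iirr_abelian // cardsT.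
Qed.

Lemma card_kills_le N P : partition P N ->
  (#|[set chi | (nontriv chi == N) && kills chi P]| <= n ^ (#|N| - #|P|))%N.
Proof.
move=> partP; have trX := transversalP partP.
rewrite -card_setD_transversal //; apply: card_dualvec_agree => chi chi'; rewrite !inE.
move=> /andP[/eqP suppN killP] /andP[/eqP suppN' killP'] agree.
apply: nontriv_eq_agree suppN suppN' _; rewrite -(cover_partition partP).
by apply: (kills_agree_transversal trX) => //; rewrite (cover_partition partP).
Qed.

(* Two distinct pairings [P] and [Q] of [N]: a block [B] of [P] not in [Q]
   has a point [x] outside the transversal, and killing [Q] as well determines
   [chi x] from the coordinates off [B]. *)
Lemma card_kills2_le N P Q : partition P N -> partition Q N -> P != Q ->
  {in P, forall B : {set 'I_n}, #|B| = 2} -> {in Q, forall C : {set 'I_n}, #|C| = 2} ->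
  (n * #|[set chi | [&& nontriv chi == N, kills chi P & kills chi Q]]|
     <= n ^ (#|N| - #|P|))%N.
Proof.
move=> partP partQ neqPQ pairP pairQ.
have /subsetPn[B PB QB] : ~~ (P \subset Q).
  apply: contra neqPQ => sPQ; rewrite eqEcard sPQ -(leq_pmul2r (ltn0Sn 1)).
  rewrite -(card_uniform_partition pairP partP).
  by rewrite -(card_uniform_partition pairQ partQ) leqnn.
set X := transversal P N; have trX := transversalP partP.
have [x Bx xX] : exists2 x, x \in B & x \notin X.
  apply/subsetPn/negP => sBX; case/and3P: trX => _ _ /forall_inP/(_ B PB).
  by rewrite (setIidPr sBX) (pairP B PB).
have xN : x \in N by apply: subsetP (partitionS partP PB) x Bx.
set C := pblock Q x; have covQ := cover_partition partQ.
have QC : C \in Q by rewrite pblock_mem ?covQ.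
have Cx : x \in C by rewrite mem_pblock covQ.
have C_offB : {in C :\ x, forall i, i \notin B}.
  move=> i /setD1P[ix Ci]; apply: contra QB => Bi.
  by rewrite (eq_set2_card2 (pairP B PB) Bi Bx ix) -(eq_set2_card2 (pairQ C QC) Ci Cx ix).
have partPB := partitionD1 partP PB.
rewrite -card_setD_transversal // (cardsD1 x) inE xX xN /= add1n expnS leq_mul2l.
apply/orP; right; apply: card_dualvec_agree => chi chi'.
rewrite !inE => /and3P[/eqP suppN killP killQ] /and3P[/eqP suppN' killP' killQ'] agree.
have agree_offB : {in N :\: B, chi =1 chi'}.
  rewrite -(cover_partition partPB); apply: (kills_agree_transversal trX) => //.
    exact: subD1set.
  move=> i; rewrite (cover_partition partPB) => /setDP[/setDP[iN Bi] iX]; apply: agree.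
  by rewrite !inE iX iN /= andbT; apply: contraNneq Bi => ->.
have agreeC : {in C, chi =1 chi'}.
  apply: (kills_agree_block (X := [set x]) killQ killQ' QC).
    by rewrite (leq_trans (subset_leq_card (subsetIl _ _))) ?cards1.
  move=> i /setDP[Ci]; rewrite inE => ix; apply: agree_offB.
  by rewrite inE C_offB ?(subsetP (partitionS partQ QC)) // !inE ix.
have agreeB : {in B, chi =1 chi'}.
  apply: (kills_agree_block (X := B :\ x) killP killP' PB).
    rewrite (setIidPl (subsetDl _ _)).
    by move: (pairP B PB); rewrite (cardsD1 x B) Bx add1n => -[->].
  by move=> i /setDP[Bi]; rewrite !inE Bi andbT negbK => /eqP ->; apply: agreeC.
apply: nontriv_eq_agree suppN suppN' _ => i iN.
by have [/agreeB|Bi] := boolP (i \in B); last by apply: agree_offB; rewrite inE Bi.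
Qed.

End CountingKilledCharacters.

Section SparseSum.
Variable gT : finGroupType.
Hypothesis abG : abelian [set: gT].
Local Notation n := #|gT|.
Implicit Types (chi : dualvec gT) (P : {set {set 'I_n}}).

Definition killing_partitions chi : {set {set {set 'I_n}}} :=
  [set P | partition P (nontriv chi) && kills chi P].

Definition killed_exceptional m P : {set dualvec gT} :=
  [set chi | [&& sparse m chi, ~~ inM m chi & P \in killing_partitions chi]].

Lemma hat1S_bij_sum chi :
  hat1S chi = ((n ^ n)%N%:R)^-1 * bij_sum (nontriv chi) (fun i => 'chi_(chi i)).
Proof.
congr (_ * _); apply: eq_bigr => pi _; rewrite [RHS]big_mkcond; apply: eq_bigr => i _.
by rewrite inE; case: eqP => [->|]; rewrite ?irr0 ?cfun1E ?inE.
Qed.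

Lemma norm_bij_sum_cube_le m chi : sparse m chi ->
  `|bij_sum (nontriv chi) (fun i => 'chi_(chi i))| ^+ 3 <=
    ((m`! * (n - m)`!) ^ 3 * \sum_(P in killing_partitions chi) (n ^ #|P|) ^ 3)%:R.
Proof.
move=> /eqP card_supp; have lin i : 'chi_(chi i) \is a linear_char by apply/char_abelianP.
apply: le_trans (lerXn2r 3 (normr_ge0 _) (ler0n _ _) (bij_sum_bound _ lin)) _.
rewrite card_supp -natrX ler_nat expnMn leq_mul2l; apply/orP; right.
apply: bigmax_expS_leq => P killP; by rewrite (bigD1 P) ?inE //= leq_addr.
Qed.

Lemma killed_exceptional_supp m P N chi : partition P N ->
  chi \in killed_exceptional m P -> (nontriv chi == N) && kills chi P.
Proof.
move=> partP; rewrite !inE => /and3P[_ _ /andP[partPchi ->]].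
by rewrite -(cover_partition partPchi) (cover_partition partP) eqxx.
Qed.

Lemma other_half_partition m chi P : ~~ inM m chi -> sparse m chi ->
  P \in half_partitions m chi -> exists2 Q, Q \in half_partitions m chi & Q != P.
Proof.
rewrite /inM => notM spm halfP; move: notM; rewrite spm (cardsD1 P) halfP /= add1n.
have [-> //|/card_gt0P[Q /setD1P[QP halfQ]] _] := posnP #|half_partitions m chi :\ P|.
by exists Q.
Qed.

Lemma card_killed_exceptional_le m P N : partition P N ->
  (#|killed_exceptional m P| <= n ^ (#|N| - #|P|))%N.
Proof.
move=> partP; apply: leq_trans (card_kills_le abG partP).
by apply/subset_leq_card/subsetP => chi /(killed_exceptional_supp partP); rewrite inE.
Qed.

Lemma card_killed_exceptional_half_le m P N : partition P N -> #|N| = m ->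
  (#|P| * 2)%N = m -> (n * #|killed_exceptional m P| <= 2 ^ 2 ^ m * n ^ (m - #|P|))%N.
Proof.
move=> partP cardN cardP.
pose QS := [set Q | [&& partition Q N, Q != P & #|Q| * 2 == m]].
pose T2 Q := [set chi | [&& nontriv chi == N, kills chi P & kills chi Q]].
have sub_T : killed_exceptional m P \subset \bigcup_(Q in QS) T2 Q.
  apply/subsetP => chi chiT.
  have /andP[/eqP suppN killP] := killed_exceptional_supp partP chiT.
  move: chiT; rewrite !inE => /and3P[spm notM /andP[partPchi _]].
  have [|Q] := other_half_partition notM spm (P := P).
    by rewrite inE partPchi killP cardP eqxx.
  rewrite inE suppN => /and3P[partQ cardQ killQ] QP; apply/bigcupP; exists Q.
    by rewrite inE partQ QP.
  by rewrite inE suppN eqxx killP.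
have le_T2 Q : Q \in QS -> (n * #|T2 Q| <= n ^ (m - #|P|))%N.
  rewrite inE => /and3P[partQ QP /eqP cardQ].
  have [->|[chi /[!inE] /and3P[/eqP suppN killP killQ]]] := set_0Vmem (T2 Q).
    by rewrite cards0 muln0.
  have pairing R : partition R N -> kills chi R -> (#|R| * 2)%N = m ->
      {in R, forall B : {set 'I_n}, #|B| = 2}.
    by move=> partR killR cardR B; apply: (@kills_pairing _ chi); rewrite ?suppN ?cardN.
  rewrite -cardN; have pairP := pairing _ partP killP cardP.
  by apply: card_kills2_le pairP (pairing _ partQ killQ cardQ); rewrite // eq_sym.
apply: (@leq_trans (n * \sum_(Q in QS) #|T2 Q|)%N).
  by rewrite leq_mul2l (leq_trans (subset_leq_card sub_T) (leq_card_bigcup _ _)) orbT.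
rewrite big_distrr /=; apply: (@leq_trans (\sum_(Q in QS) n ^ (m - #|P|))%N).
  by apply: leq_sum => Q /le_T2.
rewrite sum_nat_const leq_mul2r -cardN (leq_trans _ (card_partitions_le N)) ?orbT //.
by apply/subset_leq_card/subsetP => Q; rewrite !inE => /andP[].
Qed.

Lemma card_killed_exceptional_weight_le m P :
  (n * #|killed_exceptional m P| * (n ^ #|P|) ^ 3 <=
     if partition P (cover P) && (#|cover P| == m) then 2 ^ 2 ^ m * n ^ (2 * m) else 0)%N.
Proof.
have [->|[chi0 chi0T]] := set_0Vmem (killed_exceptional m P).
  by rewrite cards0 muln0 mul0n.
move: (chi0T); rewrite !inE => /and3P[/eqP card_supp _ /andP[partP killP]].
set N := nontriv chi0 in partP killP card_supp.
rewrite (cover_partition partP) partP card_supp eqxx -expnM.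
have n_gt0 : (0 < n)%N by rewrite -cardsT cardG_gt0.
have le_Pm : (#|P| * 2 <= m)%N.
  rewrite -card_supp (card_partition partP) -sum_nat_const; apply: leq_sum => B.
  exact: kills_block_ge2 partP killP.
case: ltngtP le_Pm => // [lt_Pm _ | eq_Pm _].
  apply: (@leq_trans (n * n ^ (m - #|P|) * n ^ (#|P| * 3))).
    by rewrite leq_mul2r leq_mul2l -card_supp card_killed_exceptional_le ?orbT.
  rewrite -expnS -expnD (leq_trans _ (leq_pmull _ (expn_gt0 2 _))) // leq_pexp2l //.
  lia.
apply: (@leq_trans (2 ^ 2 ^ m * n ^ (m - #|P|) * n ^ (#|P| * 3))).
  by rewrite leq_mul2r (card_killed_exceptional_half_le partP card_supp eq_Pm) orbT.
by rewrite -mulnA -expnD leq_mul2l leq_pexp2l ?orbT //; lia.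
Qed.

Lemma sum_killing_weights_le m :
  (n * \sum_(chi : dualvec gT | sparse m chi && ~~ inM m chi)
         \sum_(P in killing_partitions chi) (n ^ #|P|) ^ 3
     <= 'C(n, m) * 2 ^ 2 ^ m * (2 ^ 2 ^ m * n ^ (2 * m)))%N.
Proof.
rewrite (exchange_big_dep xpredT) //= big_distrr /=.
apply: (@leq_trans (\sum_P if partition P (cover P) && (#|cover P| == m)
                           then 2 ^ 2 ^ m * n ^ (2 * m) else 0)%N).
  apply: leq_sum => P _; apply: leq_trans (card_killed_exceptional_weight_le m P).
  rewrite -mulnA -sum_nat_const; apply/eq_leq; congr (_ * _).
  by apply: eq_bigl => chi; rewrite !inE -andbA.
rewrite -big_mkcond (eq_bigr (fun=> 1 * (2 ^ 2 ^ m * n ^ (2 * m))))%N; last first.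
  by move=> *; rewrite mul1n.
rewrite -big_distrl sum1_card leq_mul2r -[n in 'C(n, m)]card_ord.
rewrite (leq_trans _ (card_partitions_of_card_le _ m)) ?orbT //.
by apply/subset_leq_card/subsetP => P; rewrite inE.
Qed.

Lemma sum_norm_bij_sum_cube_le m :
  n%:R * \sum_(chi : dualvec gT | sparse m chi && ~~ inM m chi)
           `|bij_sum (nontriv chi) (fun i => 'chi_(chi i))| ^+ 3
    <= ((m`! * m ^ m) ^ 2 * (2 ^ 2 ^ m) ^ 2 * n`! ^ 3)%:R.
Proof.
have [le_mn|lt_nm] := leqP m n; last first.
  rewrite big_pred0 ?mulr0 ?ler0n // => chi; apply/andP => -[/eqP card_supp _].
  by move: (max_card (nontriv chi)); rewrite card_supp card_ord leqNgt lt_nm.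
apply: (@le_trans _ _ (n%:R * ((m`! * (n - m)`!) ^ 3 *
          \sum_(chi : dualvec gT | sparse m chi && ~~ inM m chi)
          \sum_(P in killing_partitions chi) (n ^ #|P|) ^ 3)%N%:R)).
  rewrite ler_wpM2l ?ler0n // big_distrr natr_sum /=.
  by apply: ler_sum => chi /andP[spm _]; apply: norm_bij_sum_cube_le.
rewrite -natrM ler_nat mulnCA; apply: leq_trans (fact_cube_bin_le (2 ^ 2 ^ m) le_mn).
by rewrite leq_mul2l sum_killing_weights_le orbT.
Qed.

End SparseSum.

Theorem lemma3p2 :
  forall m : nat, exists C : algC,
  forall gT : finGroupType, abelian [set: gT] ->
    \sum_(chi : dualvec gT | sparse m chi && ~~ inM m chi) `|hat1S chi| ^+ 3
      <= C * ((#|gT|%:R)^-1 * ((#|gT| `!)%:R / (#|gT| ^ #|gT|)%N%:R) ^+ 3).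
Proof.
move=> m; exists ((m`! * m ^ m) ^ 2 * (2 ^ 2 ^ m) ^ 2)%N%:R => gT abG.
have n_gt0 : (0 : algC) < #|gT|%:R by rewrite ltr0n -cardsT cardG_gt0.
set n := #|gT| in n_gt0 *.
under eq_bigr => chi _ do rewrite hat1S_bij_sum normrM exprMn normfV normr_nat.
rewrite -mulr_sumr [X in _ <= X](_ : _ = ((n ^ n)%N%:R^-1) ^+ 3 *
    (n%:R^-1 * ((m`! * m ^ m) ^ 2 * (2 ^ 2 ^ m) ^ 2 * n`! ^ 3)%N%:R)); last first.
  by rewrite natrM natrX; ring.
rewrite ler_wpM2l ?exprn_ge0 ?invr_ge0 ?ler0n // ler_pdivlMl //.
exact: sum_norm_bij_sum_cube_le.
Qed.
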